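(* Let $G$ be a finite simple graph such that the cut polytope $\mathrm{Cut}(G)$ is compressed, and let $\Sigma$ be a special simplex in $\mathrm{Cut}(G)$. If $G$ satisfies one of the conditions (a) there exists an edge of $G$ that is contained in no triangle of $G$, or (b) $G$ has an induced cycle of length $4$, then $\dim\Sigma=1$.
   Context: $G$ is a finite graph without loops or multiple edges on vertex set $[n]$ with edge set $\{e_1,\dots,e_m\}$. For $S\subset[n]$, $\delta_G(S)\in\{0,1\}^m$ has coordinate $1$ at edge $\{a,b\}$ iff $|S\cap\{a,b\}|=1$; the cut polytope $\mathrm{Cut}(G)\subset\mathbb{R}^m$ is the convex hull of all $\delta_G(S)$. An integral polytope is compressed if all of its reverse lexicographic (pulling) triangulations, using its lattice points, are unimodular. A $d$-simplex $\Sigma$ each of whose vertices is a vertex of a polytope $P$ is a special simplex in $P$ if each facet of $P$ contains exactly $d$ of the vertices of $\Sigma$. An induced cycle is a cycle without chords; a triangle is a cycle of length $3$. *)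

From HB Require Import structures.
From mathcomp Require Import all_boot all_order all_algebra.
Set Implicit Arguments. Unset Strict Implicit. Unset Printing Implicit Defensive.
Import Order.TTheory GRing.Theory Num.Theory.
Local Open Scope ring_scope.

Definition pt (d : nat) := 'rV[rat]_d.

Definition dotv d (c x : pt d) : rat := \sum_(i < d) c 0 i * x 0 i.

Definition integral_pt d (x : pt d) : Prop := forall i, x 0 i \is a Num.int.

Definition in_conv d (V : seq (pt d)) (x : pt d) : Prop :=
  exists l : 'I_(size V) -> rat,
    [/\ forall i, 0 <= l i, \sum_i l i = 1 & x = \sum_i l i *: V`_i].

(* affine rank of a finite point list: rank of the lifted points (1, v);
   the affine dimension of conv A is (arank A) - 1 *)
Definition arank d (A : seq (pt d)) : nat :=
  \rank (\matrix_(i < size A) (row_mx (1 : 'rV[rat]_1) A`_i)).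

Definition aff_indep d (A : seq (pt d)) : bool := arank A == size A.

Definition is_vertex d (V : seq (pt d)) (v : pt d) : Prop :=
  in_conv V v /\
  exists (c : pt d) (b : rat),
    [/\ forall x, in_conv V x -> dotv c x <= b,
        dotv c v = b &
        forall x, in_conv V x -> dotv c x = b -> x = v].

(* valid inequality c.x <= b for the polytope conv V, defining a facet:
   the face conv V ∩ {c.x = b} = conv [v in V | c.v = b] has dimension
   dim (conv V) - 1 *)
Definition facet_ineq d (V : seq (pt d)) (c : pt d) (b : rat) : Prop :=
  (forall x, in_conv V x -> dotv c x <= b) /\
  arank [seq v <- V | dotv c v == b] = (arank V).-1 /\ (0 < arank V)%N.

(* special simplex: list s of affinely independent vertices of conv V
   (the simplex conv s has dimension size s - 1) such that every facet of
   conv V contains exactly (size s - 1) of them *)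
Definition special_simplex d (V : seq (pt d)) (s : seq (pt d)) : Prop :=
  [/\ aff_indep s, s != [::],
      forall v, v \in s -> is_vertex V v &
      forall c b, facet_ineq V c b ->
        count (fun v => dotv c v == b) s = (size s).-1].

(* [pulling ord A sigma]: sigma (list of vertices) is a maximal simplex of the
   pulling triangulation of the point configuration A with respect to the
   order ord (earlier in ord = pulled first). *)
Definition first_pt d (ord A : seq (pt d)) : pt d :=
  head 0 [seq x <- ord | x \in A].

Inductive pulling d (ord : seq (pt d)) : seq (pt d) -> seq (pt d) -> Prop :=
| pull_base A : arank A = 1%N -> pulling ord A [:: first_pt ord A]
| pull_step A (c : pt d) (b : rat) sigma :
    (1 < arank A)%N ->
    (forall x, x \in A -> dotv c x <= b) ->
    arank [seq x <- A | dotv c x == b] = (arank A).-1 ->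
    dotv c (first_pt ord A) < b ->
    pulling ord [seq x <- A | dotv c x == b] sigma ->
    pulling ord A (first_pt ord A :: sigma).

Definition unimodular d (sigma : seq (pt d)) : Prop :=
  forall (x : pt d) (l : 'I_(size sigma) -> rat),
    integral_pt x -> \sum_i l i = 1 -> x = \sum_i l i *: sigma`_i ->
    forall i, l i \is a Num.int.

Definition compressed d (V : seq (pt d)) : Prop :=
  forall ord : seq (pt d),
    uniq ord -> (forall x, x \in ord <-> (integral_pt x /\ in_conv V x)) ->
    forall sigma, pulling ord ord sigma -> unimodular sigma.

Definition simple_graph n (E : rel 'I_n) : Prop :=
  symmetric E /\ irreflexive E.

Definition gedges n (E : rel 'I_n) : seq ('I_n * 'I_n) :=
  filter (fun p : 'I_n * 'I_n => ((p.1 : nat) < p.2)%N && E p.1 p.2) (enum [set: 'I_n * 'I_n]).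

Definition nedges n (E : rel 'I_n) : nat := size (gedges E).

Definition cutvec n (E : rel 'I_n) (X : {set 'I_n}) : pt (nedges E) :=
  \row_(j < nedges E)
    (((tnth (in_tuple (gedges E)) j).1 \in X)
       != ((tnth (in_tuple (gedges E)) j).2 \in X))%:R.

Definition cut_gens n (E : rel 'I_n) : seq (pt (nedges E)) :=
  [seq cutvec E X | X <- enum [set: {set 'I_n}]].

Definition has_triangle_free_edge n (E : rel 'I_n) : Prop :=
  exists a b, E a b /\ forall c, ~~ (E a c && E b c).

Definition has_induced_C4 n (E : rel 'I_n) : Prop :=
  exists a b c e : 'I_n,
    [/\ uniq [:: a; b; c; e],
        [&& E a b, E b c, E c e & E e a] &
        ~~ E a c && ~~ E b e].

(* If two facets of a polytope cover all its vertices, each vertex lying on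
   exactly one of them, then a special simplex has exactly two vertices: every
   facet contains all but one of its vertices, and every vertex misses exactly
   one of the two facets.  For an edge e in no triangle take x_e >= 0 and
   x_e <= 1; for an induced 4-cycle with edges e0, e1, e2, e3 take
   0 <= x_e1 + x_e2 + x_e3 - x_e0 <= 2, since a cut meets a cycle in an even
   number of edges.  These inequalities define facets because an affine
   function vanishing on the face and at one more cut vector is zero: its
   values at the four cuts T, T+Y1, T+Y2, T+Y1+Y2 (symmetric differences)
   combine to twice the weight of the unique edge cut by both Y1 and Y2, and
   suitable T, Y1, Y2 exist for every edge. *)

From mathcomp Require Import all_boot all_order all_algebra lra zify.
Set Implicit Arguments. Unset Strict Implicit. Unset Printing Implicit Defensive.
Import Order.TTheory GRing.Theory Num.Theory.
Local Open Scope ring_scope.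

Section Polytopes.

Variable d : nat.
Implicit Types (c x y : pt d) (V A : seq (pt d)).

Lemma dotvC c x : dotv c x = dotv x c.
Proof. by apply: eq_bigr => i _; rewrite mulrC. Qed.

Lemma dotvDl c1 c2 x : dotv (c1 + c2) x = dotv c1 x + dotv c2 x.
Proof. by rewrite /dotv -big_split; apply: eq_bigr => i _; rewrite mxE mulrDl. Qed.

Lemma dotvNl c x : dotv (- c) x = - dotv c x.
Proof. by rewrite /dotv -sumrN; apply: eq_bigr => i _; rewrite mxE mulNr. Qed.

Lemma dotvZl a c x : dotv (a *: c) x = a * dotv c x.
Proof. by rewrite /dotv mulr_sumr; apply: eq_bigr => i _; rewrite mxE mulrA. Qed.

Lemma dotvDr c x y : dotv c (x + y) = dotv c x + dotv c y.
Proof. by rewrite !(dotvC c) dotvDl. Qed.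

Lemma dotvNr c x : dotv c (- x) = - dotv c x.
Proof. by rewrite !(dotvC c) dotvNl. Qed.

Lemma dotv_delta j x : dotv (delta_mx 0 j) x = x 0 j.
Proof.
rewrite /dotv (bigD1 j) //= big1 ?addr0; first by rewrite mxE !eqxx mul1r.
by move=> i /negbTE ij; rewrite mxE ij andbF mul0r.
Qed.

Lemma dotv_comb (I : finType) (l : I -> rat) (F : I -> pt d) c :
  dotv c (\sum_i l i *: F i) = \sum_i l i * dotv c (F i).
Proof.
rewrite dotvC /dotv; under eq_bigr => j _ do rewrite summxE big_distrl /=.
rewrite exchange_big; apply: eq_bigr => i _; rewrite big_distrr.
by apply: eq_bigr => j _; rewrite mxE -mulrA [c 0 j * _]mulrC.
Qed.

Lemma in_conv_nth V (i : 'I_(size V)) : in_conv V V`_i.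
Proof.
exists (fun k => (k == i)%:R); split => [k||]; first by rewrite ler0n.
- by rewrite (bigD1 i) //= eqxx big1 ?addr0 // => k /negbTE ->.
- rewrite (bigD1 i) //= big1 ?addr0 ?eqxx ?scale1r // => k /negbTE ->.
  by rewrite scale0r.
Qed.

Lemma in_conv_le V c b x :
  {in V, forall v, dotv c v <= b} -> in_conv V x -> dotv c x <= b.
Proof.
move=> cVb [l [l_ge0 l_sum1 ->]]; rewrite dotv_comb.
apply: (@le_trans _ _ (\sum_i l i * b)).
  by apply: ler_sum => i _; rewrite ler_wpM2l // cVb // mem_nth.
by rewrite -big_distrl /= l_sum1 mul1r.
Qed.

(* A convex combination attaining the maximum b of [dotv c] only uses points
   where the maximum is attained; a vertex is the only such point. *)
Lemma vertex_mem V v : is_vertex V v -> v \in V.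
Proof.
move=> [[l [l_ge0 l_sum1 vE]] [c [b [cVb cvb cv_uniq]]]].
have gap_ge0 i : 0 <= l i * (b - dotv c V`_i).
  by rewrite mulr_ge0 // subr_ge0 (cVb _ (in_conv_nth i)).
have gap0 i : l i * (b - dotv c V`_i) = 0.
  apply: (@psumr_eq0P _ _ xpredT (fun i => l i * (b - dotv c V`_i))) => //.
  under eq_bigr => k _ do rewrite mulrBr.
  by rewrite sumrB -big_distrl /= l_sum1 mul1r -dotv_comb -vE cvb subrr.
have [i li_neq0] : exists i, l i != 0.
  apply/existsP; apply: contraT; rewrite negb_exists => /forallP l0.
  by move: l_sum1; rewrite big1 // => k _; apply/eqP; rewrite -[_ == _]negbK l0.
have : dotv c V`_i = b.
  by move/eqP: (gap0 i); rewrite mulf_eq0 (negbTE li_neq0) subr_eq0 => /eqP <-.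
by move/(cv_uniq _ (in_conv_nth i)) <-; apply: mem_nth.
Qed.

Definition lift_pt x : 'rV[rat]_(1 + d) := row_mx 1 x.
Definition lift_pts A : 'M[rat]_(size A, 1 + d) := \matrix_(i < size A) lift_pt A`_i.

Lemma lift_pt_mul (u0 : rat) (w x : pt d) :
  row_mx u0%:M w *m (lift_pt x)^T = (u0 + dotv w x)%:M.
Proof.
rewrite tr_row_mx mul_row_col trmx1 mulmx1; apply/rowP => i.
rewrite ord1 !mxE eqxx !mulr1n; congr (_ + _).
by apply: eq_bigr => j _; rewrite !mxE.
Qed.

Lemma lift_pts_mul A (u0 : rat) (w : pt d) :
  row_mx u0%:M w *m (lift_pts A)^T = \row_i (u0 + dotv w A`_i).
Proof.
apply/rowP => i; rewrite [RHS]mxE.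
have /rowP/(_ 0) := lift_pt_mul u0 w A`_i; rewrite [X in _ = X]mxE eqxx mulr1n => <-.
by rewrite !mxE; apply: eq_bigr => j _; rewrite !mxE.
Qed.

Lemma lift_pts_subP m A (M : 'M_(m, 1 + d)) :
  {in A, forall v, (lift_pt v <= M)%MS} -> (lift_pts A <= M)%MS.
Proof. by move=> AM; apply/row_subP => i; rewrite rowK AM // mem_nth. Qed.

Lemma lift_pt_sub A v : v \in A -> (lift_pt v <= lift_pts A)%MS.
Proof.
rewrite -index_mem => vA; apply: (eq_row_sub (Ordinal vA)).
by rewrite rowK nth_index // -index_mem.
Qed.

Lemma rank_lift_pts_le A (u0 : rat) (w : pt d) :
  (u0 != 0) || (w != 0) -> {in A, forall v, u0 + dotv w v = 0} ->
  (\rank (lift_pts A) <= d)%N.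
Proof.
move=> uw_neq0 uwA0; set z := row_mx u0%:M w.
have z_neq0 : z != 0.
  apply: contraTneq uw_neq0 => /eqP; rewrite row_mx_eq0 => /andP[/eqP u0M /eqP ->].
  by move/rowP: u0M => /(_ 0); rewrite !mxE eqxx mulr1n => ->; rewrite !eqxx.
have z_ker : (z <= kermx (lift_pts A)^T)%MS.
  by apply/sub_kermxP; rewrite lift_pts_mul; apply/rowP => i; rewrite !mxE uwA0 // mem_nth.
by have := mxrankS z_ker; rewrite mxrank_ker mxrank_tr rank_rV z_neq0; lia.
Qed.

Lemma rank_lift_pts_full A :
  (forall (u0 : rat) (w : pt d), {in A, forall v, u0 + dotv w v = 0} -> u0 = 0 /\ w = 0) ->
  \rank (lift_pts A) = (1 + d)%N.
Proof.
move=> A_aff_span.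
have ker0 : kermx (lift_pts A)^T = 0.
  apply/row_matrixP => i; rewrite row0; set r := row i _.
  have r0 : r *m (lift_pts A)^T = 0 by apply/sub_kermxP/row_sub.
  rewrite -(hsubmxK r) [lsubmx r]mx11_scalar in r0 *.
  have [-> ->] : lsubmx r 0 0 = 0 /\ rsubmx r = 0.
    apply: A_aff_span => v /(nthP 0)[k kA <-].
    by move/rowP: r0 => /(_ (Ordinal kA)); rewrite lift_pts_mul !mxE.
  by rewrite raddf0 row_mx0.
have := mxrank_ker (lift_pts A)^T; rewrite ker0 mxrank0 mxrank_tr => ker_rank.
by apply/eqP; rewrite eqn_leq rank_leq_col /=; lia.
Qed.

Lemma rank_lift_pts_cons x A :
  (\rank (lift_pts (x :: A)) <= (\rank (lift_pts A)).+1)%N.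
Proof.
have sub : (lift_pts (x :: A) <= lift_pt x + lift_pts A)%MS.
  apply: lift_pts_subP => v; rewrite inE => /predU1P[->|vA].
    exact: addsmxSl.
  exact: submx_trans (lift_pt_sub vA) (addsmxSr _ _).
have := mxrank_adds_leqif (lift_pt x) (lift_pts A) => /leqifP.
have := mxrankS sub; have := rank_leq_row (lift_pt x).
by case: ifP => _ /=; lia.
Qed.

Lemma facet_ineq_of_affine_span V c b x0 :
  {in V, forall v, dotv c v <= b} -> x0 \in V -> dotv c x0 != b ->
  (forall (u0 : rat) (w : pt d),
     {in [seq v <- V | dotv c v == b], forall v, u0 + dotv w v = 0} ->
     u0 + dotv w x0 = 0 -> u0 = 0 /\ w = 0) ->
  facet_ineq V c b.
Proof.
move=> cVb x0V x0_off aff_span; set F := [seq v <- V | dotv c v == b].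
have rank_x0F : \rank (lift_pts (x0 :: F)) = (1 + d)%N.
  apply: rank_lift_pts_full => u0 w uw0.
  by apply: aff_span => [v vF|]; apply: uw0; rewrite inE ?vF ?orbT ?eqxx.
have rank_V : \rank (lift_pts V) = (1 + d)%N.
  apply/eqP; rewrite eqn_leq rank_leq_col -{1}rank_x0F mxrankS //.
  apply: lift_pts_subP => v; rewrite inE => /predU1P[->|]; first exact: lift_pt_sub.
  by rewrite mem_filter => /andP[_]; apply: lift_pt_sub.
have rank_F : (\rank (lift_pts F) <= d)%N.
  apply: (@rank_lift_pts_le _ (- b) c).
    move: x0_off; apply: contraNT; rewrite negb_or !negbK oppr_eq0 => /andP[/eqP-> /eqP->].
    by rewrite /dotv big1 // => i _; rewrite mxE mul0r.
  by move=> v; rewrite mem_filter => /andP[/eqP-> _]; rewrite addNr.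
have := rank_lift_pts_cons x0 F; rewrite rank_x0F => rank_F_ge.
split; first by move=> x; apply: in_conv_le.
change (\rank (lift_pts F) = (\rank (lift_pts V)).-1 /\ (0 < \rank (lift_pts V))%N).
have pred_rank : (1 + d).-1 = d by rewrite add1n.
by rewrite rank_V pred_rank; split => //; lia.
Qed.

Lemma special_simplex_dim1 V s c1 b1 c2 b2 :
  special_simplex V s -> facet_ineq V c1 b1 -> facet_ineq V c2 b2 ->
  {in V, forall v, (dotv c1 v == b1) (+) (dotv c2 v == b2)} ->
  (size s).-1 = 1%N.
Proof.
case=> _ s_nil s_vert s_facets F1 F2 xorV.
set P1 := fun v => dotv c1 v == b1; set P2 := fun v => dotv c2 v == b2.
have s_xor : {in s, forall v, P1 v (+) P2 v}.
  by move=> v /s_vert/vertex_mem; apply: xorV.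
have := count_predUI P1 P2 s.
rewrite (@eq_in_count _ (predU P1 P2) predT); last first.
  by move=> v /s_xor /=; case: (P1 v); case: (P2 v).
rewrite (@eq_in_count _ (predI P1 P2) pred0); last first.
  by move=> v /s_xor /=; case: (P1 v); case: (P2 v).
rewrite count_predT count_pred0 (s_facets _ _ F1) (s_facets _ _ F2) addn0.
by case: s s_nil {s_vert s_facets s_xor} => // v s' _ /=; set k := size s'; lia.
Qed.

End Polytopes.

Definition symdiff (T : finType) (A B : {set T}) : {set T} := (A :\: B) :|: (B :\: A).

Lemma in_symdiff (T : finType) (A B : {set T}) x :
  (x \in symdiff A B) = (x \in A) (+) (x \in B).
Proof. by rewrite !inE; case: (x \in A); case: (x \in B). Qed.

Lemma xor_square (t y1 y2 : bool) :
  (t%:R + (t (+) y1 (+) y2)%:R - (t (+) y1)%:R - (t (+) y2)%:R : rat) =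
  (y1 && y2)%:R * (if t then 2 else -2).
Proof. by case: t; case: y1; case: y2 => /=; lra. Qed.

(* A set S of vertices of the cycle 0 - 1 - 2 - 3 - 0, i.e. of Z/4, cuts the
   edge {i, i + 1} iff [c4cut S i]; [c4face k S] says that the cut pattern of S
   lies on the facet x1 + x2 + x3 - x0 = 2k, and [c4off k] is a pattern off it. *)
Definition c4cut (S : {set 'I_4}) (i : 'I_4) : bool := (i \in S) != (i + 1 \in S).
Arguments c4cut S i%_R.

Definition c4rest S : nat := (c4cut S 1 + c4cut S 2 + c4cut S 3)%N.

Definition c4face (k : bool) S : bool := c4rest S == (c4cut S 0 + 2 * k)%N.

Definition c4off (k : bool) : {set 'I_4} := if k then set0 else [set 2].

Lemma c4cutE S :
  [/\ c4cut S 0 = ((0 \in S) != (1 \in S)), c4cut S 1 = ((1 \in S) != (2 \in S)),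
      c4cut S 2 = ((2 \in S) != (3 \in S)) & c4cut S 3 = ((3 \in S) != (0 \in S))].
Proof. by rewrite /c4cut; split; congr (_ != (_ \in S)); apply: val_inj. Qed.

Lemma c4_bounds S : (c4cut S 0 <= c4rest S <= c4cut S 0 + 2)%N.
Proof.
rewrite /c4rest; case: (c4cutE S) => -> -> -> ->.
by case: (0 \in S); case: (1 \in S); case: (2 \in S); case: (3 \in S).
Qed.

Lemma c4face_xor S : c4face false S (+) c4face true S.
Proof.
rewrite /c4face /c4rest; case: (c4cutE S) => -> -> -> ->.
by case: (0 \in S); case: (1 \in S); case: (2 \in S); case: (3 \in S).
Qed.

Lemma c4face_flip k i : exists S, c4face k S && c4face k (symdiff S [set i]).
Proof.
case: k; case: i => [[|[|[|[|//]]]] i_lt4];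
  [exists [set 2] | exists [set 3] | exists [set 2; 3] | exists [set 2]
  | exists set0 | exists set0 | exists [set 1] | exists [set 0]];
  by rewrite /c4face /c4rest /c4cut !inE.
Qed.

Lemma c4face_off k : ~~ c4face k (c4off k).
Proof. by case: k; rewrite /c4face /c4rest /c4cut !inE. Qed.

Lemma sum_ord4 (F : 'I_4 -> rat) : \sum_(i < 4) F i = F 0 + F 1 + F 2 + F 3.
Proof.
rewrite !big_ord_recl big_ord0 addr0 !addrA.
by congr (F _ + F _ + F _ + F _); apply: val_inj.
Qed.

Lemma c4_affine_rigid k (u0 : rat) (v : 'I_4 -> rat) :
  (forall S, c4face k S || (S == c4off k) -> u0 + \sum_i v i * (c4cut S i)%:R = 0) ->
  u0 = 0 /\ forall i, v i = 0.
Proof.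
move=> H; have [u00 v0 v1 v2 v3] : [/\ u0 = 0, v 0 = 0, v 1 = 0, v 2 = 0 & v 3 = 0].
  case: k H => H.
    move: (H set0) (H [set 2]) (H [set 2; 3]) (H [set 3]) (H [set 1; 3]).
    rewrite !sum_ord4 /c4face /c4rest /c4cut !inE /= ?eqxx.
    by move=> /(_ isT) ? /(_ isT) ? /(_ isT) ? /(_ isT) ? /(_ isT) ?; split; lra.
  move: (H [set 2]) (H set0) (H [set 1]) (H [set 0]) (H [set 1; 2]).
  rewrite !sum_ord4 /c4face /c4rest /c4cut !inE /= ?eqxx.
  by move=> /(_ isT) ? /(_ isT) ? /(_ isT) ? /(_ isT) ? /(_ isT) ?; split; lra.
split=> // -[[|[|[|[|//]]]] i_lt4];
  [rewrite -v0 | rewrite -v1 | rewrite -v2 | rewrite -v3]; congr v; exact: val_inj.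
Qed.

Section Cuts.

Variables (n : nat) (E : rel 'I_n).
Hypothesis E_simple : simple_graph E.
Implicit Types (X Y T : {set 'I_n}) (p q v x : 'I_n) (g j : 'I_(nedges E)).

Definition edge_ends j : 'I_n * 'I_n := tnth (in_tuple (gedges E)) j.

Definition joins j p q : bool := (edge_ends j == (p, q)) || (edge_ends j == (q, p)).

Definition cut X j : bool := ((edge_ends j).1 \in X) != ((edge_ends j).2 \in X).

Lemma cutvecE X j : cutvec E X 0 j = (cut X j)%:R.
Proof. by rewrite mxE. Qed.

Lemma edge_endsP j :
  (((edge_ends j).1 : nat) < (edge_ends j).2)%N && E (edge_ends j).1 (edge_ends j).2.
Proof. by have := mem_tnth j (in_tuple (gedges E)); rewrite mem_filter => /andP[]. Qed.

Lemma joinsC j p q : joins j p q = joins j q p.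
Proof. by rewrite /joins orbC. Qed.

Lemma joins_ends j : joins j (edge_ends j).1 (edge_ends j).2.
Proof. by rewrite /joins; case: (edge_ends j) => p q; rewrite eqxx. Qed.

Lemma joinsP j p q :
  reflect (edge_ends j = (p, q) \/ edge_ends j = (q, p)) (joins j p q).
Proof. by apply: (iffP orP) => -[] /eqP e; [left|right|left|right]. Qed.

Lemma joins_edge j p q : joins j p q -> E p q.
Proof.
have [E_sym _] := E_simple; have /andP[_ Ej] := edge_endsP j.
by case/joinsP=> e; rewrite e /= in Ej; rewrite // E_sym.
Qed.

Lemma joins_neq j p q : joins j p q -> p != q.
Proof.
have [_ E_irr] := E_simple.
by move/joins_edge; apply: contraTneq => ->; rewrite E_irr.
Qed.

Lemma joins_same j p q p' q' : joins j p q -> joins j p' q' ->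
  (p = p' /\ q = q') \/ (p = q' /\ q = p').
Proof. by move=> /joinsP[] e /joinsP[]; rewrite e => -[-> ->]; auto. Qed.

Lemma joins_inj g g' p q : joins g p q -> joins g' p q -> g = g'.
Proof.
have ends_eq h h' : edge_ends h = edge_ends h' -> h = h'.
  have uniq_ged : uniq (gedges E) by apply: filter_uniq; apply: enum_uniq.
  rewrite /edge_ends !(tnth_nth (edge_ends h)) => /eqP.
  by rewrite nth_uniq // => /eqP/val_inj.
have /andP[lt_g _] := edge_endsP g; have /andP[lt_g' _] := edge_endsP g'.
case/joinsP=> eg; case/joinsP=> eg'; apply: ends_eq; rewrite eg eg' //.
  by move: lt_g lt_g'; rewrite eg eg' /= => /ltn_trans h /h; rewrite ltnn.
by move: lt_g lt_g'; rewrite eg eg' /= => /ltn_trans h /h; rewrite ltnn.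
Qed.

Lemma edge_index p q : E p q -> exists j, joins j p q.
Proof.
have [E_sym E_irr] := E_simple => Epq.
have pq_neq : p != q by apply: contraTneq Epq => ->; rewrite E_irr.
have [pr pr_in pr_pq] : exists2 pr, pr \in gedges E & (pr == (p, q)) || (pr == (q, p)).
  case: (ltngtP p q) => [lt|lt|/val_inj eq]; last by rewrite eq eqxx in pq_neq.
  - by exists (p, q); rewrite ?eqxx // mem_filter /= lt Epq mem_enum inE.
  - by exists (q, p); rewrite ?eqxx ?orbT // mem_filter /= lt E_sym Epq mem_enum inE.
have pr_idx : (index pr (gedges E) < nedges E)%N by rewrite index_mem.
by exists (Ordinal pr_idx); rewrite /joins /edge_ends (tnth_nth pr) nth_index.
Qed.

Lemma cut_joins X j p q : joins j p q -> cut X j = ((p \in X) != (q \in X)).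
Proof. by rewrite /cut; case/joinsP=> -> //=; rewrite eq_sym. Qed.

Lemma cut_symdiff A B j : cut (symdiff A B) j = cut A j (+) cut B j.
Proof.
rewrite /cut !in_symdiff.
by case: (_.1 \in A); case: (_.1 \in B); case: (_.2 \in A); case: (_.2 \in B).
Qed.

Lemma cut_gensP y : reflect (exists X, y = cutvec E X) (y \in cut_gens E).
Proof.
apply: (iffP mapP) => [[X _ ->]|[X ->]]; first by exists X.
by exists X; rewrite // mem_enum inE.
Qed.

Lemma dotv_cutvec w X : dotv w (cutvec E X) = \sum_g w 0 g * (cut X g)%:R.
Proof. by apply: eq_bigr => g _; rewrite cutvecE. Qed.

Lemma cutvec_row X : cutvec E X = \row_j (cut X j)%:R.
Proof. by apply/rowP => j; rewrite !mxE. Qed.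

Lemma cutvec_square T Y1 Y2 g :
  (forall g', cut Y1 g' && cut Y2 g' = (g' == g)) ->
  cutvec E T + cutvec E (symdiff (symdiff T Y1) Y2)
    - cutvec E (symdiff T Y1) - cutvec E (symdiff T Y2)
  = (if cut T g then 2 else -2) *: delta_mx 0 g.
Proof.
move=> common; apply/rowP => g'; rewrite !cutvec_row !mxE !cut_symdiff xor_square common.
by case: eqVneq => [->|_]; rewrite ?mulr1 ?mul1r ?mulr0 ?mul0r.
Qed.

Lemma cut_common_edge v x Y g :
  v \notin Y -> joins g v x -> x \in Y -> {in Y, forall y, E v y -> y = x} ->
  forall g', cut Y g' && cut [set v] g' = (g' == g).
Proof.
move=> vY gvx xY Y_x g'; apply/andP/eqP => [[]|->]; last first.
  have xv : x != v by apply: contraNneq vY => <-.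
  by rewrite !(cut_joins _ gvx) !inE eqxx (negbTE xv) (negbTE vY) xY.
have at_v p q : joins g' p q -> p = v -> q \in Y -> g' = g.
  move=> g'pq pv qY; rewrite pv in g'pq.
  have qx := Y_x q qY (joins_edge g'pq).
  by rewrite qx in g'pq; apply: joins_inj g'pq gvx.
rewrite !(cut_joins _ (joins_ends g')) !inE.
have [e1|_] := eqVneq (edge_ends g').1 v.
  rewrite e1 (negbTE vY) /= negbK => e2Y _.
  exact: at_v (joins_ends g') e1 e2Y.
have [e2|//] := eqVneq (edge_ends g').2 v.
rewrite e2 (negbTE vY) eqbF_neg negbK => e1Y _.
by apply: at_v e2 e1Y; rewrite joinsC joins_ends.
Qed.

Section AffineFunctional.

Variables (u0 : rat) (w : pt (nedges E)).

Definition cut_affine X := u0 + dotv w (cutvec E X).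

Lemma cut_affine_square_eq0 T Y1 Y2 g :
  (forall g', cut Y1 g' && cut Y2 g' = (g' == g)) ->
  cut_affine T = 0 -> cut_affine (symdiff (symdiff T Y1) Y2) = 0 ->
  cut_affine (symdiff T Y1) = 0 -> cut_affine (symdiff T Y2) = 0 ->
  w 0 g = 0.
Proof.
move=> common f0 f12 f1 f2.
have := congr1 (dotv w) (cutvec_square T common).
rewrite [X in _ = X]dotvC dotvZl dotv_delta !dotvDr !dotvNr.
by rewrite /cut_affine in f0 f12 f1 f2; case: (cut T g) => ?; lra.
Qed.

Lemma weight_eq0_pendant (F : pred {set 'I_n}) v x Y T g :
  (forall X, F X -> cut_affine X = 0) -> (forall X, F (symdiff X [set v]) = F X) ->
  v \notin Y -> joins g v x -> x \in Y -> {in Y, forall y, E v y -> y = x} ->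
  F T -> F (symdiff T Y) -> w 0 g = 0.
Proof.
move=> F0 F_v vY gvx xY Y_x FT FTY.
by apply: (cut_affine_square_eq0 (T := T) (cut_common_edge vY gvx xY Y_x));
  apply: F0; rewrite ?F_v.
Qed.

Lemma weight_eq0_outside (C : {set 'I_n}) (F : pred {set 'I_n}) T0 g :
  (forall X, F X -> cut_affine X = 0) -> F T0 ->
  (forall X v, v \notin C -> F (symdiff X [set v]) = F X) ->
  (forall v x, v \notin C -> x \in C -> E v x -> exists Y T,
     [/\ v \notin Y, x \in Y, {in Y, forall y, E v y -> y = x}, F T & F (symdiff T Y)]) ->
  ((edge_ends g).1 \notin C) || ((edge_ends g).2 \notin C) -> w 0 g = 0.
Proof.
move=> F0 FT0 F_inv entering.
have pendant v x : joins g v x -> v \notin C -> w 0 g = 0.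
  move=> gvx vC; have F_v X := F_inv X v vC.
  have [xC|xC] := boolP (x \in C).
    have [Y [T [vY xY Y_x FT FTY]]] := entering v x vC xC (joins_edge gvx).
    exact: weight_eq0_pendant F0 F_v vY gvx xY Y_x FT FTY.
  apply: (@weight_eq0_pendant F v x [set x] T0 g F0 F_v) => //; rewrite ?inE ?F_inv //.
    exact: joins_neq gvx.
  by move=> y; rewrite inE => /eqP.
case/orP => endC; first exact: pendant (joins_ends g) endC.
by apply: (pendant _ (edge_ends g).1 _ endC); rewrite joinsC joins_ends.
Qed.

Lemma cut_affine_support (I : finType) (j : I -> 'I_(nedges E)) X :
  injective j -> (forall g, (forall i, g != j i) -> w 0 g = 0) ->
  cut_affine X = u0 + \sum_i w 0 (j i) * (cut X (j i))%:R.
Proof.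
move=> j_inj w_supp; rewrite /cut_affine dotv_cutvec (bigID (mem (j @: setT))) /=.
rewrite [X in u0 + (_ + X)]big1 ?addr0 => [|g gj]; last first.
  by rewrite w_supp ?mul0r // => i; apply: contraNneq gj => ->; apply: imset_f.
rewrite big_imset /=; last by move=> i i' _ _; apply: j_inj.
by congr (_ + _); apply: eq_bigl => i; rewrite inE.
Qed.

End AffineFunctional.

Lemma cut_facet c b X0 :
  (forall X, dotv c (cutvec E X) <= b) -> dotv c (cutvec E X0) != b ->
  (forall u0 w, (forall X, dotv c (cutvec E X) == b -> cut_affine u0 w X = 0) ->
     cut_affine u0 w X0 = 0 -> u0 = 0 /\ w = 0) ->
  facet_ineq (cut_gens E) c b.
Proof.
move=> valid X0_off rigid.
apply: (facet_ineq_of_affine_span (x0 := cutvec E X0)) => //.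
- by move=> v /cut_gensP[X ->].
- by apply/cut_gensP; exists X0.
move=> u0 w face0 X00; apply: rigid => // X X_face; apply: face0.
by rewrite mem_filter X_face; apply/cut_gensP; exists X.
Qed.

Section TriangleFreeEdge.

Variables (a b : 'I_n) (e : 'I_(nedges E)).
Hypotheses (e_ab : joins e a b) (no_triangle : forall x, ~~ (E a x && E b x)).

Definition edge_ineq (k : bool) : pt (nedges E) :=
  if k then delta_mx 0 e else - delta_mx 0 e.

Lemma dotv_edge_ineq k X :
  dotv (edge_ineq k) (cutvec E X) = if k then (cut X e)%:R else - (cut X e)%:R.
Proof. by rewrite /edge_ineq; case: k; rewrite ?dotvNl dotv_delta cutvecE. Qed.

Lemma edge_face k X : (dotv (edge_ineq k) (cutvec E X) == k%:R) = (cut X e == k).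
Proof.
by rewrite dotv_edge_ineq; case: k; case: (cut X e); rewrite ?oppr_eq0 ?oner_eq0 ?eqxx.
Qed.

Lemma cut_flip_end X : cut (symdiff X [set a]) e = ~~ cut X e.
Proof.
rewrite cut_symdiff (cut_joins [set a] e_ab) !inE eqxx (eq_sym b).
by rewrite (negbTE (joins_neq e_ab)) addbT.
Qed.

Lemma edge_weight_eq0 k u0 w X0 :
  cut X0 e = ~~ k -> (forall X, cut X e = k -> cut_affine u0 w X = 0) ->
  forall g, g != e -> w 0 g = 0.
Proof.
move=> X0e face0; have [E_sym E_irr] := E_simple.
set C := [set a; b]; set T := symdiff X0 [set a].
have Te : cut T e = k by rewrite cut_flip_end X0e negbK.
have cutC : cut C e = false by rewrite (cut_joins _ e_ab) !inE !eqxx orbT.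
have w_out g : ((edge_ends g).1 \notin C) || ((edge_ends g).2 \notin C) -> w 0 g = 0.
  apply: (@weight_eq0_outside u0 w C (fun X => cut X e == k) T) => //=.
  - by move=> X /eqP; apply: face0.
  - by rewrite Te.
  - move=> X v; rewrite cut_symdiff !inE negb_or => /andP[va vb].
    by rewrite (cut_joins [set v] e_ab) !inE ![_ == v]eq_sym (negbTE va) (negbTE vb) addbF.
  have FTC : cut (symdiff T C) e == k by rewrite cut_symdiff cutC addbF Te.
  move=> v x vC xC Evx; exists C, T; split; rewrite ?Te //.
  move=> y yC Evy; move: xC yC Evx Evy; rewrite !inE.
  case/orP=> /eqP-> /orP[]/eqP-> // Ev1 Ev2; have := no_triangle v;
    by rewrite !(E_sym _ v) ?Ev1 ?Ev2.
move=> g ge; apply: w_out; apply: contraR ge; rewrite negb_or !negbK !inE.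
case/andP=> /orP[]/eqP e1 /orP[]/eqP e2; have := joins_ends g; rewrite e1 e2 => jg.
- by have := joins_edge jg; rewrite E_irr.
- exact/eqP/(joins_inj jg e_ab).
- by rewrite joinsC in jg; apply/eqP/(joins_inj jg e_ab).
- by have := joins_edge jg; rewrite E_irr.
Qed.

Lemma edge_rigid k u0 w X0 :
  cut X0 e = ~~ k -> (forall X, cut X e = k -> cut_affine u0 w X = 0) ->
  cut_affine u0 w X0 = 0 -> u0 = 0 /\ w = 0.
Proof.
move=> X0e face0 X00; have w_off := edge_weight_eq0 X0e face0.
have support X : cut_affine u0 w X = u0 + w 0 e * (cut X e)%:R.
  rewrite (@cut_affine_support u0 w _ (fun _ : 'I_1 => e)) ?big_ord1 //.
    by move=> i i' _; rewrite !ord1.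
  by move=> g /(_ ord0); apply: w_off.
have Te : cut (symdiff X0 [set a]) e = k by rewrite cut_flip_end X0e negbK.
have [u00 we0] : u0 = 0 /\ w 0 e = 0.
  by move: (face0 _ Te) X00; rewrite !support Te X0e; case: (k) => /=; lra.
split => //; apply/rowP => g; rewrite mxE.
by have [->|] := eqVneq g e; [apply: we0 | apply: w_off].
Qed.

Lemma edge_facet k : facet_ineq (cut_gens E) (edge_ineq k) k%:R.
Proof.
have cut_a : cut [set a] e.
  by rewrite (cut_joins _ e_ab) !inE eqxx (eq_sym b) (negbTE (joins_neq e_ab)).
have cut0 : cut set0 e = false by rewrite /cut !inE.
apply: (@cut_facet _ _ (if k then set0 else [set a])).
- by move=> X; rewrite dotv_edge_ineq; case: k; case: (cut X e) => /=; lra.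
- by rewrite edge_face; case: k; rewrite ?cut0 ?cut_a.
move=> u0 w face0; apply: (edge_rigid (k := k)); first by case: (k).
by move=> X Xe; apply: face0; rewrite edge_face Xe.
Qed.

End TriangleFreeEdge.

Section InducedC4.

Variables (cyc : 'I_4 -> 'I_n) (cyc_edge : 'I_4 -> 'I_(nedges E)).
Hypotheses (cyc_inj : injective cyc)
  (cyc_adj : forall i i', E (cyc i) (cyc i') = (i' == i + 1) || (i == i' + 1))
  (cyc_edgeP : forall i, joins (cyc_edge i) (cyc i) (cyc (i + 1))).
Implicit Types (S : {set 'I_4}).

Definition cyc_trace X : {set 'I_4} := [set i | cyc i \in X].

Lemma cut_cyc_edge X i : cut X (cyc_edge i) = c4cut (cyc_trace X) i.
Proof. by rewrite (cut_joins _ (cyc_edgeP i)) /c4cut !inE. Qed.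

Lemma cyc_trace_symdiff A B : cyc_trace (symdiff A B) = symdiff (cyc_trace A) (cyc_trace B).
Proof. by apply/setP => i; rewrite /cyc_trace !inE. Qed.

Lemma cyc_trace_imset S : cyc_trace (cyc @: S) = S.
Proof. by apply/setP => i; rewrite inE mem_imset. Qed.

Lemma cyc_trace_out X v : v \notin cyc @: setT -> cyc_trace (symdiff X [set v]) = cyc_trace X.
Proof.
move=> vC; apply/setP => i; rewrite /cyc_trace !inE.
have /negbTE -> : cyc i != v by apply: contraNneq vC => <-; apply: imset_f.
by rewrite andbF orbF.
Qed.

Lemma cyc_trace_flip S i : cyc_trace (symdiff (cyc @: S) [set cyc i]) = symdiff S [set i].
Proof. by rewrite cyc_trace_symdiff -imset_set1 !cyc_trace_imset. Qed.

Definition c4_ineq (k : bool) : pt (nedges E) :=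
  (if k then 1 else -1) *:
  (delta_mx 0 (cyc_edge 1) + delta_mx 0 (cyc_edge 2) + delta_mx 0 (cyc_edge 3)
   - delta_mx 0 (cyc_edge 0)).

Lemma dotv_c4_ineq k X :
  dotv (c4_ineq k) (cutvec E X) =
  (if k then 1 else -1) * ((c4rest (cyc_trace X))%:R - (c4cut (cyc_trace X) 0)%:R).
Proof.
by rewrite dotvZl !dotvDl dotvNl !dotv_delta !cutvecE !cut_cyc_edge /c4rest !natrD.
Qed.

Lemma c4_face k X :
  (dotv (c4_ineq k) (cutvec E X) == (2 * k)%:R) = c4face k (cyc_trace X).
Proof.
rewrite dotv_c4_ineq /c4face; case: k.
  by rewrite mul1r muln1 subr_eq -natrD eqr_nat addnC.
by rewrite muln0 addn0 mulN1r oppr_eq0 subr_eq0 eqr_nat.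
Qed.

Lemma c4_valid k X : dotv (c4_ineq k) (cutvec E X) <= (2 * k)%:R.
Proof.
have /andP[lo hi] := c4_bounds (cyc_trace X).
rewrite dotv_c4_ineq; case: k.
  by rewrite mul1r muln1 lerBlDr -natrD ler_nat addnC.
by rewrite muln0 mulN1r oppr_le0 subr_ge0 ler_nat.
Qed.

Lemma cyc_edge_inj : injective cyc_edge.
Proof.
move=> i i' ii'_edge; have := cyc_edgeP i'; rewrite -ii'_edge => e_i'.
case: (joins_same (cyc_edgeP i) e_i') => -[/cyc_inj // ii' /cyc_inj i'i].
by move: ii'; rewrite -i'i -addrA -{1}[i]addr0 => /addrI/eqP.
Qed.

Lemma c4_weight_eq0 k u0 w :
  (forall X, c4face k (cyc_trace X) -> cut_affine u0 w X = 0) ->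
  forall g, (forall i, g != cyc_edge i) -> w 0 g = 0.
Proof.
move=> face0; set C := cyc @: setT.
have [S0 /andP[FS0 _]] := c4face_flip k 0.
have w_out g : ((edge_ends g).1 \notin C) || ((edge_ends g).2 \notin C) -> w 0 g = 0.
  apply: (@weight_eq0_outside u0 w C (fun X => c4face k (cyc_trace X)) (cyc @: S0)).
  - exact: face0.
  - by rewrite /= cyc_trace_imset.
  - by move=> X v vC /=; rewrite cyc_trace_out.
  move=> v x vC /imsetP[i _ ->] _; have [S /andP[FS FSi]] := c4face_flip k i.
  exists [set cyc i], (cyc @: S); split; rewrite /= ?inE ?cyc_trace_imset ?cyc_trace_flip //.
    by apply: contraNneq vC => ->; apply: imset_f.
  by move=> y; rewrite inE => /eqP.
move=> g g_off; apply: w_out; rewrite -negb_and; apply/negP.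
case/andP=> /imsetP[i _ e1] /imsetP[i' _ e2]; have := joins_ends g; rewrite e1 e2 => g_ii'.
move: (joins_edge g_ii'); rewrite cyc_adj => /orP[]/eqP ii'.
  by have := g_off i; rewrite ii' in g_ii'; rewrite (joins_inj g_ii' (cyc_edgeP i)) eqxx.
by have := g_off i'; rewrite joinsC ii' in g_ii'; rewrite (joins_inj g_ii' (cyc_edgeP i')) eqxx.
Qed.

Lemma c4_rigid k u0 w :
  (forall X, c4face k (cyc_trace X) -> cut_affine u0 w X = 0) ->
  cut_affine u0 w (cyc @: c4off k) = 0 -> u0 = 0 /\ w = 0.
Proof.
move=> face0 off0; have w_off := c4_weight_eq0 face0.
have support X :
    cut_affine u0 w X = u0 + \sum_i w 0 (cyc_edge i) * (c4cut (cyc_trace X) i)%:R.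
  rewrite (@cut_affine_support u0 w _ cyc_edge X cyc_edge_inj w_off).
  by congr (_ + _); apply: eq_bigr => i _; rewrite cut_cyc_edge.
have [u00 w_cyc0] : u0 = 0 /\ forall i, w 0 (cyc_edge i) = 0.
  apply: (c4_affine_rigid (k := k)) => S S_face; have := support (cyc @: S).
  rewrite cyc_trace_imset => <-; case/orP: S_face => [FS|/eqP->] //.
  by apply: face0; rewrite cyc_trace_imset.
split => //; apply/rowP => g; rewrite mxE.
have [/codomP[i ->]|g_off] := boolP (g \in codom cyc_edge); first exact: w_cyc0.
by apply: w_off => i; apply: contraNneq g_off => ->; apply: codom_f.
Qed.

Lemma c4_facet k : facet_ineq (cut_gens E) (c4_ineq k) (2 * k)%:R.
Proof.
apply: (@cut_facet _ _ (cyc @: c4off k)) => [X||u0 w face0].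
- exact: c4_valid.
- by rewrite c4_face cyc_trace_imset c4face_off.
apply: c4_rigid => X X_face; apply: face0.
by rewrite c4_face.
Qed.

End InducedC4.

End Cuts.

Lemma induced_C4_cycle n (E : rel 'I_n) :
  simple_graph E -> has_induced_C4 E ->
  exists cyc : 'I_4 -> 'I_n,
    injective cyc /\ forall i i', E (cyc i) (cyc i') = (i' == i + 1) || (i == i' + 1).
Proof.
move=> [E_sym E_irr] [a [b [c [e [abce /and4P[Eab Ebc Ece Eea] /andP[nac nbe]]]]]].
have [Eba Ecb Eec Eae] : [/\ E b a, E c b, E e c & E a e] by split; rewrite E_sym.
have [nca neb] : ~~ E c a /\ ~~ E e b by split; rewrite E_sym.
exists (fun i => nth a [:: a; b; c; e] i); split.
  by move=> i i' /eqP; rewrite nth_uniq // => /eqP/val_inj.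
case=> [[|[|[|[|//]]]] ?] [[|[|[|[|//]]]] ?];
  by rewrite /= ?E_irr ?Eab ?Ebc ?Ece ?Eea ?Eba ?Ecb ?Eec ?Eae
             ?(negbTE nac) ?(negbTE nbe) ?(negbTE nca) ?(negbTE neb).
Qed.

Theorem lemma3p2 (n : nat) (E : rel 'I_n) (s : seq (pt (nedges E))) :
  simple_graph E ->
  compressed (cut_gens E) ->
  special_simplex (cut_gens E) s ->
  has_triangle_free_edge E \/ has_induced_C4 E ->
  (size s).-1 = 1%N.
Proof.
move=> E_simple _ s_special [[a [b [Eab no_triangle]]] | C4].
  have [e e_ab] := edge_index E_simple Eab.
  apply: (special_simplex_dim1 s_special (edge_facet E_simple e_ab no_triangle false)
                                          (edge_facet E_simple e_ab no_triangle true)).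
  by move=> v /cut_gensP[X ->]; rewrite !edge_face; case: (cut X e).
have [cyc [cyc_inj cyc_adj]] := induced_C4_cycle E_simple C4.
have cyc_edge_ex i : exists j : 'I_(nedges E), joins j (cyc i) (cyc (i + 1)).
  by apply: (edge_index E_simple); rewrite cyc_adj eqxx.
have [cyc_edge cyc_edgeP] := fin_all_exists cyc_edge_ex.
apply: (special_simplex_dim1 s_special (c4_facet E_simple cyc_inj cyc_adj cyc_edgeP false)
                                        (c4_facet E_simple cyc_inj cyc_adj cyc_edgeP true)).
by move=> v /cut_gensP[X ->]; rewrite !(c4_face cyc_edgeP); apply: c4face_xor.
Qed.
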